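(* Let $G$ be a finite group with $|G| = mp^k$, where $p$ is a prime, $k \geq 1$, and $m$ is a natural number such that $1 < m/q < p < m$, where $q$ is the smallest prime divisor of $m$. Then $m^*(G) > |G|$, and so $G$ is not Chermak-Delgado simple.
   Context: For $H \leq G$, $m_G(H) = |H|\,|C_G(H)|$; $m^*(G) = \max\{ m_G(H) : H \leq G\}$; $\mathcal{CD}(G) = \{ H \leq G : m_G(H) = m^*(G)\}$. $G$ is Chermak-Delgado simple if $\mathcal{CD}(G) = \{1, G\}$. *)

From mathcomp Require Import all_boot all_order all_fingroup.
Set Implicit Arguments.
Unset Strict Implicit.
Unset Printing Implicit Defensive.
Local Open Scope group_scope.

Section CD.
Variable gT : finGroupType.

Definition mCD (G H : {set gT}) : nat := (#|H| * #|'C_G(H)|)%N.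

Definition mstar (G : {set gT}) : nat :=
  \max_(H : {group gT} | H \subset G) mCD G H.

Definition CDlattice (G : {set gT}) : {set {group gT}} :=
  [set H : {group gT} | (H \subset G) && (mCD G H == mstar G)].

Definition CD_simple (G : {group gT}) : Prop :=
  CDlattice G = [set 1%G; G].
End CD.

From mathcomp Require Import all_boot all_fingroup all_solvable zify.
From mathcomp Require vcharacter.
Set Implicit Arguments. Unset Strict Implicit. Unset Printing Implicit Defensive.

(* Let q = pdiv m and s = m/q, the largest proper divisor of m, so that
   1 < s < p < m.  Then m < pq and m < p^2, and a divisor of m that is > 1 and
   congruent to 1 mod p is m itself.  Let P be a Sylow p-subgroup of G and
   Z = Z(P); we find H <= G with |H| |C_G(H)| > |G| = m |P|.
   If |Z| >= p^2, or |Z| = p and C_G(Z) > P (so |C_G(Z) : P| >= q), take H = Z.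
   Otherwise C_G(Z) = P, and since G/C_G(Z) embeds in Aut Z, of order p - 1 < m,
   P is not normal: there are m Sylow p-subgroups and N_G(Z) <= N_G(P) = P.
   If |P| = p, P is a Frobenius complement; its kernel K has order m, and every
   P-invariant subgroup of K has order 1 mod p, so K is an abelian q-group and
   H = K works.  If |P| > p, two Sylow p-subgroups meet in a subgroup D of index
   p, normal in G by the same count inside N_G(D), and H = Z(D) works unless
   |Z(D)| <= mp.  In that case the (p - 1) m conjugates of elements of the TI
   set Z^# fill Z(D)^#, which forces m = p + 1; an involution of G then has a
   conjugate in P, of odd order. *)

Lemma pdiv_mul_div m : pdiv m * (m %/ pdiv m) = m.
Proof. by rewrite mulnC divnK ?pdiv_dvd. Qed.

Lemma dvdn_div_pdiv_lt_eq m d :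
  0 < m -> d %| m -> m %/ pdiv m < d -> d = m.
Proof.
move=> m_gt0 dv_dm lt_sd; have def_m : m %/ d * d = m by rewrite divnK.
case: (ltngtP (m %/ d) 1) => [| lt1 | eq1]; last by rewrite -def_m eq1 mul1n.
  by rewrite ltnS leqn0 => /eqP eq0; move: m_gt0; rewrite -def_m eq0.
have le_qe : pdiv m <= m %/ d by rewrite pdiv_min_dvd ?dvdn_div.
move: lt_sd; rewrite ltnNge leq_divRL ?pdiv_gt0 // -{2}def_m (mulnC d).
by rewrite leq_mul2r le_qe orbT.
Qed.

Lemma dvdn_modn1_eq p m d :
  0 < m -> m %/ pdiv m < p -> d %| m -> 1 < d -> d %% p = 1 -> d = m.
Proof.
move=> m_gt0 lt_sp dv_dm gt1_d d_mod; apply: dvdn_div_pdiv_lt_eq => //.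
apply: ltn_trans lt_sp _; rewrite ltnNge; apply/negP => le_dp; move: d_mod.
case: ltngtP le_dp => // [lt_dp | ->] _; last by rewrite modnn.
by rewrite modn_small // => d1; rewrite d1 in gt1_d.
Qed.

Lemma ltn_mul_pdiv m p : m %/ pdiv m < p -> m < p * pdiv m.
Proof. by move=> lt_sp; rewrite -{1}(pdiv_mul_div m) mulnC ltn_pmul2r ?pdiv_gt0. Qed.

Lemma ltn_pdiv_sqr m p : 1 < m %/ pdiv m -> m %/ pdiv m < p -> m < p * p.
Proof.
move=> gt1_s lt_sp; rewrite -{1}(pdiv_mul_div m).
have le_qs : pdiv m <= m %/ pdiv m by rewrite pdiv_min_dvd ?dvdn_div ?pdiv_dvd.
exact: leq_ltn_trans (leq_mul le_qs (leqnn _)) (ltn_mul lt_sp lt_sp).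
Qed.

Lemma pred_mul_leq_pexp p m b :
  1 < p -> p < m -> m < p * p -> p ^ b <= m * p -> p.-1 * m <= (p ^ b).-1 ->
  b = 2 /\ m = p.+1.
Proof.
move=> gt1_p lt_pm lt_m_pp le_pb le_count.
have lt_b3 : b < 3.
  rewrite -(ltn_exp2l _ _ gt1_p); apply: leq_ltn_trans le_pb _.
  by rewrite !expnS expn0 muln1 mulnC ltn_pmul2l // ltnW.
move: le_count; case: b lt_b3 {le_pb} => [|[|[|]]] // _.
all: rewrite ?expnS ?expn0 ?muln1; nia.
Qed.

Local Open Scope group_scope.

Section GroupFacts.
Variable gT : finGroupType.
Implicit Types A G H K L P Q Z : {group gT}.

Lemma mstar_gt G H K :
  H \subset G -> K \subset 'C_G(H) -> (#|G| < #|H| * #|K| -> #|G| < mstar G)%N.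
Proof.
move=> sHG sKC lt_GHK; apply: leq_trans lt_GHK (leq_trans _ (leq_bigmax_cond _ sHG)).
by rewrite /mCD leq_mul2l subset_leq_card ?orbT.
Qed.

Lemma not_CD_simple G : (#|G| < mstar G)%N -> ~ CD_simple G.
Proof.
move=> lt_G_mstar CDsimpleG.
have : 1%G \in CDlattice G by rewrite CDsimpleG !inE eqxx.
rewrite inE => /andP[_ /eqP]; rewrite /mCD cards1 mul1n cent1T setIT => eq_G_mstar.
by rewrite eq_G_mstar ltnn in lt_G_mstar.
Qed.

Lemma card_fixedpoint_free_mod (p : nat) P L :
  p.-group P -> P \subset 'N(L) -> 'C_L(P) = 1 -> #|L| = 1 %[mod p].
Proof.
move=> pP nLP cLP; have actsP : [acts P, on L | 'J] by rewrite astabsJ.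
by rewrite (pgroup_fix_mod pP actsP) afixJ cLP cards1.
Qed.

Lemma fixedpoint_free_abelian (p : nat) P K :
  prime p -> p.-group P -> P \subset 'N(K) -> 'C_K(P) = 1 ->
  (#|K| %/ pdiv #|K| < p)%N -> abelian K.
Proof.
move=> p_pr pP nKP cKP lt_sp.
have invariant_full L : L \subset K -> P \subset 'N(L) -> (1 < #|L|)%N -> #|L| = #|K|.
  move=> sLK nLP gt1_L; apply: dvdn_modn1_eq lt_sp (cardSg sLK) gt1_L _ => //.
  have cLP : 'C_L(P) = 1 by apply/trivgP; rewrite -cKP setSI.
  by rewrite (card_fixedpoint_free_mod pP nLP cLP) modn_small ?prime_gt1.
have [-> | ntK] := eqVneq K 1%G; first exact: abelian1.
have coKP : coprime #|K| #|P|.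
  rewrite (p'nat_coprime _ pP) // p'natE // /dvdn.
  by rewrite (card_fixedpoint_free_mod pP nKP cKP) modn_small ?prime_gt1.
set q := pdiv #|K|.
have [R sylR nRP] := sol_coprime_Sylow_exists q (pgroup_sol pP) nKP coKP.
have gt1_K : (1 < #|K|)%N by rewrite cardG_gt1.
have eqRK : R :=: K.
  apply/eqP; rewrite eqEcard (pHall_sub sylR).
  rewrite (invariant_full R) ?(pHall_sub sylR) ?leqnn //.
  by rewrite (card_Hall sylR) p_part_gt1 pi_pdiv.
have qK : q.-group K by rewrite -eqRK (pHall_pgroup sylR).
have ntZK : 'Z(K) != 1 by rewrite center_nil_eq1 ?(pgroup_nil qK).
have nZP : P \subset 'N('Z(K)) := subset_trans nKP (char_norms (center_char K)).
apply/center_idP/eqP.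
by rewrite eqEcard center_sub (invariant_full 'Z(K)) ?center_sub ?cardG_gt1 ?leqnn.
Qed.

Lemma normedTI_prime G L Z :
  prime #|Z| -> L \subset G -> L \subset 'N(Z) -> 'N_G(Z) \subset L ->
  normedTI Z^# G L.
Proof.
move=> Z_pr sLG nZL sNL; apply/normedTI_memJ_P; split=> //.
  by rewrite setD_eq0 subG1 -cardG_gt1 prime_gt1.
move=> a g /setD1P[nt_a Za] Gg; apply/idP/idP=> [/setD1P[nt_ag Zag] | Lg].
  have meetZ : Z :&: Z :^ g != 1.
    by apply/trivgPn; exists (a ^ g); rewrite // inE Zag memJ_conjg.
  have eqZg : Z :^ g = Z.
    by apply/eqP; rewrite eq_sym eqEcard prime_meetG // cardJg leqnn.
  by apply: (subsetP sNL); rewrite inE Gg; apply/normP.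
by rewrite !inE conjg_eq1 nt_a memJ_norm ?(subsetP nZL) //=.
Qed.

Lemma Frobenius_selfnormalizing_prime G P :
  prime #|P| -> P \proper G -> 'N_G(P) = P -> [Frobenius G with complement P].
Proof.
move=> P_pr ltPG eqNP; apply/andP; split; first by rewrite (proper_neq ltPG).
by apply: normedTI_prime; rewrite ?normG ?eqNP ?(proper_sub ltPG).
Qed.

Lemma index_cent_dvdn_totient G Z :
  cyclic Z -> G \subset 'N(Z) -> #|G : 'C_G(Z)| %| totient #|Z|.
Proof.
move=> cycZ nZG; rewrite -card_Aut_cyclic //.
have := cardSg (Aut_conj_aut Z G).
by rewrite card_morphim ker_conj_aut /= (setIidPr nZG) indexgI.
Qed.

Lemma normedTI_no_involution G L Z A y :
  normedTI Z^# G L -> odd #|L| -> abelian A -> G \subset 'N(A) -> Z \subset A ->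
  A^# \subset class_support Z^# G -> y \in G -> #[y] = 2 -> False.
Proof.
move=> tiZ oddL cAA nAG sZA sAZG Gy oy.
have [ntZ1 _ memJ] := normedTI_memJ_P tiZ.
have notL h : h \in L -> #[h] = 2 -> False.
  by move=> Lh oh; have := order_dvdG Lh; rewrite oh dvdn2 oddL.
have yy : y * y = 1 by rewrite -expg2 -oy expg_order.
have [z Z1z] := set0Pn _ ntZ1; have [ntz Zz] := setD1P Z1z.
have Az := subsetP sZA z Zz.
have Azy : z ^ y \in A by rewrite memJ_norm ?(subsetP nAG).
(* [z * z ^ y] is centralized by [y]: either it is 1 and [y] inverts [z], or it
   lies in a conjugate of [Z^#]; both put a conjugate of [y] in [L]. *)
set c := z * z ^ y.
have fix_c : c ^ y = c.
  by rewrite conjMg -conjgM yy conjg1 (centsP cAA _ Azy _ Az).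
have [c1 | ntc] := eqVneq c 1.
  apply: (notL y) => //; rewrite -(memJ z) //.
  by rewrite -(mulg1_eq c1) !inE invg_eq1 ntz groupV.
have /(subsetP sAZG) : c \in A^# by rewrite !inE ntc (groupM Az Azy).
rewrite class_supportEr => /bigcupP[g Gg]; rewrite mem_conjg => Z1w.
apply: (notL (y ^ g^-1)); last by rewrite orderJ.
by rewrite -(memJ (c ^ g^-1)) ?groupJ ?groupV // -conjJg fix_c.
Qed.

Lemma Sylow_meet_index (p : nat) G P Q :
  prime p -> p.-Sylow(G) P -> p.-Sylow(G) Q -> P != Q -> (#|G : P| < p * p)%N ->
  #|Q : P :&: Q| = p.
Proof.
move=> p_pr sylP sylQ neqPQ lt_iP.
have oPQ : #|P| = #|Q| by rewrite (card_Hall sylP) (card_Hall sylQ).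
have le_index : (#|Q : P :&: Q| <= #|G : P|)%N.
  rewrite -(leq_pmul2l (cardG_gt0 P)) (Lagrange (pHall_sub sylP)).
  have eq_PQ : (#|P| * #|Q : P :&: Q| = #|(P * Q)%g|)%N.
    apply/eqP; rewrite -(eqn_pmul2r (cardG_gt0 (P :&: Q))) -mul_cardG.
    by rewrite -mulnA mulnC (mulnC _ #|_ :&: _|) (Lagrange (subsetIr P Q)) mulnC.
  by rewrite eq_PQ subset_leq_card ?mul_subG ?(pHall_sub sylP) ?(pHall_sub sylQ).
have [e oe] := p_natP (pnat_dvd (dvdn_indexg Q (P :&: Q)) (pHall_pgroup sylQ)).
case: e oe le_index => [|[|e]] oe le_index; rewrite ?oe ?expn1 //.
  move/eqP: oe; rewrite indexg_eq1 subsetI subxx andbT => sQP.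
  by case/eqP: neqPQ; apply/val_inj/eqP; rewrite /= eq_sym eqEcard sQP oPQ leqnn.
by have := leq_ltn_trans le_index lt_iP; rewrite oe mulnn ltn_exp2l ?prime_gt1.
Qed.

Lemma card_Syl_eq (p m : nat) H P :
  prime p -> (0 < m)%N -> (m %/ pdiv m < p)%N -> p.-Sylow(H) P -> #|H : P| %| m ->
  (1 < #|'Syl_p(H)|)%N -> #|'Syl_p(H)| = m.
Proof.
move=> p_pr m_gt0 lt_sp sylP dv_iP gt1_Syl.
apply: dvdn_modn1_eq lt_sp _ gt1_Syl (card_Syl_mod H p_pr) => //.
have sPN : P \subset 'N_H(P) by rewrite subsetI (pHall_sub sylP) normG.
rewrite (card_Syl sylP); apply: dvdn_trans dv_iP.
by rewrite -(Lagrange_index (subsetIl H 'N(P)) sPN) dvdn_mulr.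
Qed.

End GroupFacts.

Section SylowOfSmallIndex.
Variables (gT : finGroupType) (G P : {group gT}) (p m : nat).
Hypotheses (p_pr : prime p) (sylP : p.-Sylow(G) P) (ntP : P :!=: 1).
Hypotheses (iP : #|G : P| = m) (gt1_s : (1 < m %/ pdiv m)%N).
Hypotheses (lt_sp : (m %/ pdiv m < p)%N) (lt_pm : (p < m)%N).

Local Notation Z := 'Z(P).

Let sPG : P \subset G := pHall_sub sylP.
Let pP : p.-group P := pHall_pgroup sylP.
Let m_gt0 : (0 < m)%N := ltn_trans (prime_gt0 p_pr) lt_pm.
Let oG : #|G| = (#|P| * m)%N. Proof. by rewrite -iP Lagrange. Qed.
Let sZG : Z \subset G := subset_trans (center_sub P) sPG.
Let sPCZ : P \subset 'C_G(Z). Proof. by rewrite subsetI sPG centsC subsetIr. Qed.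

Lemma mstar_gt_center_nonprime : #|Z| != p -> (#|G| < mstar G)%N.
Proof.
move=> Z_neq_p; apply: (mstar_gt sZG sPCZ); rewrite oG mulnC ltn_pmul2r //.
have ntZ : Z != 1 by rewrite center_nil_eq1 ?(pgroup_nil pP).
have [[|[|a]] oZ] := p_natP (pgroupS (center_sub P) pP).
- by rewrite -cardG_gt1 oZ in ntZ.
- by rewrite oZ expn1 eqxx in Z_neq_p.
apply: leq_trans (ltn_pdiv_sqr gt1_s lt_sp) _.
by rewrite oZ mulnn leq_pexp2l ?prime_gt0.
Qed.

Lemma mstar_gt_centralizer : #|Z| = p -> 'C_G(Z) != P -> (#|G| < mstar G)%N.
Proof.
move=> oZ neqCP; apply: (mstar_gt sZG (subxx _)).
have sCG : 'C_G(Z) \subset G := subsetIl _ _.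
have dv_index : #|'C_G(Z) : P| %| m.
  by rewrite -iP -(Lagrange_index sCG sPCZ) dvdn_mull.
have gt1_index : (1 < #|'C_G(Z) : P|)%N.
  rewrite ltn_neqAle indexg_gt0 andbT eq_sym indexg_eq1.
  by apply: contra neqCP => sCP; rewrite eqEsubset sCP sPCZ.
rewrite oZ -(Lagrange sPCZ) oG mulnCA ltn_pmul2l ?cardG_gt0 //.
by apply: leq_trans (ltn_mul_pdiv lt_sp) _; rewrite leq_mul2l pdiv_min_dvd ?orbT.
Qed.

Lemma Sylow_not_normal : #|Z| = p -> 'C_G(Z) = P -> ~~ (G \subset 'N(P)).
Proof.
move=> oZ eqCP; apply/negP => nPG.
have nZG : G \subset 'N(Z) := subset_trans nPG (char_norms (center_char P)).
have cycZ : cyclic Z by rewrite prime_cyclic ?oZ.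
have := index_cent_dvdn_totient cycZ nZG.
rewrite oZ eqCP iP totient_prime // => dv_m.
have p1_gt0 : (0 < p.-1)%N by rewrite -subn1 subn_gt0 prime_gt1.
have := leq_ltn_trans (dvdn_leq p1_gt0 dv_m) (leq_ltn_trans (leq_pred p) lt_pm).
by rewrite ltnn.
Qed.

Lemma card_Syl_selfnormalizing : ~~ (G \subset 'N(P)) ->
  #|'Syl_p(G)| = m /\ 'N_G(P) = P.
Proof.
move=> not_nPG; have sPN : P \subset 'N_G(P) by rewrite subsetI sPG normG.
have nSyl : #|'Syl_p(G)| = m.
  apply: card_Syl_eq sylP _ _ => //; first by rewrite iP.
  rewrite (card_Syl sylP) ltn_neqAle indexg_gt0 andbT eq_sym indexg_eq1.
  by apply: contra not_nPG => /subsetIP[].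
split=> //; apply/eqP; rewrite eqEsubset sPN andbT -indexg_eq1.
have := Lagrange_index (subsetIl G 'N(P)) sPN.
rewrite -(card_Syl sylP) nSyl iP -{2}(muln1 m) => /eqP.
by rewrite eqn_pmul2l.
Qed.

Lemma norm_center_sub : 'C_G(Z) = P -> 'N_G(P) = P -> 'N_G(Z) \subset P.
Proof.
move=> eqCP eqNP; rewrite -{2}eqNP subsetI subsetIl -{2}eqCP.
rewrite normsI ?(subset_trans (subsetIl G _) (normG G)) //.
exact: subset_trans (subsetIr G _) (cent_norm Z).
Qed.

Lemma mstar_gt_prime_Sylow : #|P| = p -> 'N_G(P) = P -> (#|G| < mstar G)%N.
Proof.
move=> oP eqNP.
have ltPG : P \proper G.
  by rewrite properEcard sPG oG ltn_Pmulr ?cardG_gt0 ?(ltn_trans (prime_gt1 p_pr)).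
have P_pr : prime #|P| by rewrite oP.
have frobP := Frobenius_selfnormalizing_prime P_pr ltPG eqNP.
have [K frobK] := vcharacter.Frobenius_kernel_exists frobP.
have [defG _ _ _ _] := Frobenius_context frobK.
have [nsKG _ _ nKP _] := sdprod_context defG.
have oK : #|K| = m.
  by apply/eqP; rewrite -(eqn_pmul2r (cardG_gt0 P)) (sdprod_card defG) oG mulnC.
have cKK : abelian K.
  apply: fixedpoint_free_abelian p_pr pP nKP (Frobenius_trivg_cent frobK) _.
  by rewrite oK.
have sKG := normal_sub nsKG.
apply: (mstar_gt sKG (_ : K \subset 'C_G(K))); first by rewrite subsetI sKG.
by rewrite oG oK oP ltn_pmul2r.
Qed.

Lemma normal_Sylow_meet : #|'Syl_p(G)| = m ->
  exists D : {group gT}, [/\ D <| G, D \subset P & #|P : D| = p].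
Proof.
move=> nSyl; have [Q sylQ neqQP] : exists2 Q : {group gT}, p.-Sylow(G) Q & Q != P.
  have PSyl : P \in 'Syl_p(G) by rewrite inE sylP.
  move: nSyl; rewrite (cardsD1 P) PSyl add1n => nSyl.
  have : (0 < #|'Syl_p(G) :\ P|)%N.
    by rewrite -ltnS nSyl (ltn_trans (prime_gt1 p_pr) lt_pm).
  by case/card_gt0P => Q /setD1P[neqQP]; rewrite inE; exists Q.
have sQG := pHall_sub sylQ.
set D := (P :&: Q)%G.
have lt_iP : (#|G : P| < p * p)%N by rewrite iP ltn_pdiv_sqr.
have iDQ : #|Q : D| = p by apply: Sylow_meet_index lt_iP; rewrite // eq_sym.
have iDP : #|P : D| = p.
  have oPQ : #|P| = #|Q| by rewrite (card_Hall sylP) (card_Hall sylQ).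
  by rewrite -(divgS (subsetIl P Q)) oPQ divgS ?subsetIr.
have nsDP : D <| P.
  by apply: (p_maximal_normal pP); rewrite p_index_maximal ?subsetIl ?iDP.
have nsDQ : D <| Q.
  apply: (p_maximal_normal (pHall_pgroup sylQ)).
  by rewrite p_index_maximal ?subsetIr ?iDQ.
set N := 'N_G(D).
have sNG : N \subset G := subsetIl _ _.
have sPN : P \subset N by rewrite subsetI sPG normal_norm.
have sQN : Q \subset N by rewrite subsetI sQG normal_norm.
have sylPN := pHall_subl sPN sNG sylP; have sylQN := pHall_subl sQN sNG sylQ.
have index_eq : (#|G : N| * #|N : P| = m)%N by rewrite (Lagrange_index sNG sPN).
have nSylN : #|'Syl_p(N)| = m.
  apply: (card_Syl_eq p_pr m_gt0 lt_sp sylPN); first by rewrite -index_eq dvdn_mull.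
  have : [set P; Q] \subset 'Syl_p(N).
    by apply/subsetP => X; rewrite !inE => /orP[] /eqP ->.
  by move/subset_leq_card; rewrite cards2 eq_sym neqQP.
have le_m_index : (m <= #|N : P|)%N.
  rewrite -nSylN (card_Syl sylPN) dvdn_leq ?indexg_gt0 // indexgS //.
  by rewrite subsetI sPN normG.
have nDG : G \subset 'N(D).
  have := leq_mul (leqnn #|G : N|) le_m_index.
  rewrite index_eq -{2}(mul1n m) leq_pmul2r // => le1.
  by have /subsetIP[] : G \subset N by rewrite -indexg_eq1 eqn_leq le1 indexg_gt0.
exists D; split=> //; last exact: subsetIl.
by rewrite /normal (subset_trans (subsetIl P Q) sPG) nDG.
Qed.

Lemma class_support_center_eq (A : {group gT}) :
  normedTI Z^# G P -> #|Z| = p -> Z \subset A -> p.-group A ->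
  G \subset 'N(A) -> (#|A| <= m * p)%N ->
  m = p.+1 /\ class_support Z^# G = A^#.
Proof.
move=> tiZ oZ sZA pA nAG le_A.
have count : #|class_support Z^# G| = (p.-1 * m)%N.
  by rewrite (card_support_normedTI tiZ) iP -oZ (cardsD1 1 Z) group1.
have sub : class_support Z^# G \subset A^#.
  apply/subsetP => _ /imset2P[x g /setD1P[ntx Zx] Gg ->].
  by rewrite !inE conjg_eq1 ntx memJ_norm ?(subsetP nAG) ?(subsetP sZA).
have oA1 : #|A^#| = #|A|.-1 by rewrite (cardsD1 1 A) group1.
have [b oA] := p_natP pA.
have [b2 em] : b = 2 /\ m = p.+1.
  apply: pred_mul_leq_pexp (prime_gt1 p_pr) lt_pm (ltn_pdiv_sqr gt1_s lt_sp) _ _.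
    by rewrite -oA.
  by rewrite -oA -oA1 -count subset_leq_card.
split=> //; apply/eqP; rewrite eqEcard sub count oA1 oA b2 em.
have := prime_gt1 p_pr; nia.
Qed.

Lemma center_meet_large (D : {group gT}) :
  D <| G -> D \subset P -> D :!=: 1 -> #|Z| = p -> 'N_G(Z) \subset P ->
  (m * p < #|'Z(D)|)%N.
Proof.
move=> nsDG sDP ntD oZ sNZ; rewrite ltnNge; apply/negP => le_A.
have Z_pr : prime #|Z| by rewrite oZ.
have sZD : Z \subset D.
  have nsDP : D <| P := normalS sDP sPG nsDG.
  have meetZD : 'Z(P) :&: D != 1 by rewrite setIC meet_center_nil ?(pgroup_nil pP).
  exact: prime_meetG Z_pr meetZD.
have sZA : Z \subset 'Z(D).
  by rewrite subsetI sZD (subset_trans (subsetIr P _) (centS sDP)).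
have nAG := normal_norm (char_normal_trans (center_char D) nsDG).
have pA := pgroupS (subset_trans (center_sub D) sDP) pP.
have tiZ := normedTI_prime Z_pr sPG (normal_norm (center_normal P)) sNZ.
have [em eqCS] := class_support_center_eq tiZ oZ sZA pA nAG le_A.
have odd_p : odd p.
  have [p2 | //] := even_prime p_pr.
  by have := leq_ltn_trans gt1_s lt_sp; rewrite p2.
have oddP : odd #|P| by have [k ->] := p_natP pP; rewrite oddX odd_p orbT.
have even_G : 2 %| #|G| by rewrite oG em dvdn_mull // dvdn2 /= odd_p.
have [y Gy oy] := Cauchy (isT : prime 2) even_G.
apply: normedTI_no_involution tiZ oddP (center_abelian D) nAG sZA _ Gy oy.
by rewrite eqCS.
Qed.

Lemma mstar_gt_Sylow_nonprime : #|P| != p -> #|Z| = p -> 'C_G(Z) = P ->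
  'N_G(P) = P -> #|'Syl_p(G)| = m -> (#|G| < mstar G)%N.
Proof.
move=> P_neq_p oZ eqCP eqNP nSyl.
have [D [nsDG sDP iDP]] := normal_Sylow_meet nSyl.
have ntD : D :!=: 1.
  by apply: contra P_neq_p => /eqP D1; rewrite -iDP D1 indexg1.
have big_A := center_meet_large nsDG sDP ntD oZ (norm_center_sub eqCP eqNP).
have sAG : 'Z(D) \subset G := subset_trans (center_sub D) (normal_sub nsDG).
have sDC : D \subset 'C_G('Z(D)).
  by rewrite subsetI (normal_sub nsDG) centsC subsetIr.
apply: (mstar_gt sAG sDC).
by rewrite oG -(Lagrange sDP) iDP -mulnA mulnC ltn_pmul2r // mulnC.
Qed.

Lemma mstar_gt_order : (#|G| < mstar G)%N.
Proof.
have [oZ | ] := eqVneq #|Z| p; last exact: mstar_gt_center_nonprime.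
have [eqCP | ] := eqVneq 'C_G(Z) (P : {set gT}); last exact: mstar_gt_centralizer.
have [nSyl eqNP] := card_Syl_selfnormalizing (Sylow_not_normal oZ eqCP).
have [oP | P_neq_p] := eqVneq #|P| p; first exact: mstar_gt_prime_Sylow.
exact: mstar_gt_Sylow_nonprime.
Qed.

End SylowOfSmallIndex.

Theorem theorem2 (gT : finGroupType) (G : {group gT}) (p k m : nat) :
  prime p -> (1 <= k)%N -> #|G| = (m * p ^ k)%N ->
  (1 < m %/ pdiv m)%N -> (m %/ pdiv m < p)%N -> (p < m)%N ->
  (#|G| < mstar G)%N /\ ~ CD_simple G.
Proof.
move=> p_pr k_gt0 oG gt1_s lt_sp lt_pm.
have pk_gt0 : (0 < p ^ k)%N by rewrite expn_gt0 prime_gt0.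
have m_gt0 : (0 < m)%N := ltn_trans (prime_gt0 p_pr) lt_pm.
have p'm : ~~ (p %| m).
  apply/negP => dv_pm; have eq_pm := dvdn_div_pdiv_lt_eq m_gt0 dv_pm lt_sp.
  by rewrite eq_pm ltnn in lt_pm.
have [P sylP] := Sylow_exists p G.
have oP : #|P| = (p ^ k)%N.
  rewrite (card_Hall sylP) oG p_part lognM // pfactorK //.
  by rewrite logn_coprime ?prime_coprime.
have iP : #|G : P| = m by rewrite -divgS ?(pHall_sub sylP) // oG oP mulnK.
have ntP : P :!=: 1 by rewrite -cardG_gt1 oP -{1}(expn0 p) ltn_exp2l ?prime_gt1.
have lt_G_mstar := mstar_gt_order p_pr sylP ntP iP gt1_s lt_sp lt_pm.
by split; last exact: not_CD_simple.
Qed.
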